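(* Let $(X,\le)$ be a locally finite poset and $R$ a commutative ring with identity. Let $\eta\in[\mathbb{I}_{(X,\le)},R]$ be given by $\eta[x,x]=1$, $\eta[x,y]=-1$ if $x\prec y$, and $\eta[x,y]=0$ otherwise. Then $\eta$ is invertible in the incidence algebra and, for all $x\le y$, $\eta^{-1}[x,y]=|\mathbb{M}[x,y]|$, the number of maximal linearly ordered subsets of the interval $[x,y]$. Consequently, for $a\in X$ and $f,g:X_{\ge a}\to R$, one has $g(y)=f(y)-\sum_{a\le x\prec y}f(x)$ for all $y\ge a$ if and only if $f(y)=\sum_{a\le x\le y}|\mathbb{M}[x,y]|\,g(x)$ for all $y\ge a$.
   Context: A poset is locally finite if all intervals $[x,y]=\{z:x\le z\le y\}$ are finite. The cover relation: $x\prec y$ iff $x<y$ and there is no $z$ with $x<z<y$. $X_{\ge a}=\{x\in X: x\ge a\}$. The incidence algebra $[\mathbb{I}_{(X,\le)},R]$ consists of maps from intervals to $R$ with product $(f\star g)[x,z]=\sum_{x\le y\le z}f[x,y]g[y,z]$ and unit $\epsilon[x,y]=\delta_{x,y}$. *)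

From HB Require Import structures.
From mathcomp Require Import all_boot all_order all_algebra.
Set Implicit Arguments. Unset Strict Implicit. Unset Printing Implicit Defensive.
Import Order.TTheory GRing.Theory.

Local Open Scope order_scope.

(* A locally finite poset: a partial order together with, for every x y,
   a duplicate-free enumeration of the interval [x,y] = {z | x <= z <= y}.
   (Existence of such enumerations is exactly local finiteness.) *)
Record locfin (disp : Order.disp_t) (T : porderType disp) := LocFin {
  itv : T -> T -> seq T;
  itv_uniq : forall x y, uniq (itv x y);
  mem_itv : forall x y z, (z \in itv x y) = (x <= z <= y)
}.

Section Incidence.
Variables (disp : Order.disp_t) (T : porderType disp) (L : locfin T).
Local Open Scope ring_scope.
Variable R : comPzRingType.

(* Elements of the incidence algebra are represented by functions T -> T -> R,
   of which only the values f x y with x <= y are relevant. *)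
Definition inc_mul (f g : T -> T -> R) : T -> T -> R :=
  fun x z => \sum_(y <- itv L x z) f x y * g y z.

Definition inc_unit : T -> T -> R := fun x y => (x == y)%:R.

Definition inc_eq (f g : T -> T -> R) : Prop :=
  forall x y : T, (x <= y)%O -> f x y = g x y.

Definition inc_inverse (f finv : T -> T -> R) : Prop :=
  inc_eq (inc_mul f finv) inc_unit /\ inc_eq (inc_mul finv f) inc_unit.

End Incidence.

Definition covers (disp : Order.disp_t) (T : porderType disp) (x y : T) : Prop :=
  x < y /\ ~ (exists z, x < z < y).

Definition covb (disp : Order.disp_t) (T : porderType disp) (L : locfin T)
  (x y : T) : bool := (x < y) && ~~ has (fun z => x < z < y) (itv L x y).

Lemma covbP (disp : Order.disp_t) (T : porderType disp) (L : locfin T) (x y : T) :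
  reflect (covers x y) (covb L x y).
Proof.
rewrite /covb /covers; apply: (iffP andP) => -[xy H]; split => //.
- move=> [z /andP[xz zy]]; move/negP: H; apply; apply/hasP; exists z => //.
  by rewrite mem_itv (ltW xz) (ltW zy).
  by rewrite xz zy.
- apply/negP => /hasP [z _ Hz]; apply: H; by exists z.
Qed.

(* chains (linearly ordered subsets) of the interval [x,y], viewed as sets
   over the finite type of elements of itv L x y *)
Definition is_chain (disp : Order.disp_t) (T : porderType disp) (s : seq T)
  (A : {set seq_sub s}) : bool :=
  [forall u in A, forall v in A, ((val u <= val v) || (val v <= val u))%O].

Definition num_max_chains (disp : Order.disp_t) (T : porderType disp)
  (L : locfin T) (x y : T) : nat :=
  #|[set A : {set seq_sub (itv L x y)} | maxset (@is_chain _ _ (itv L x y)) A]|.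

From HB Require Import structures.
From mathcomp Require Import all_boot all_order all_algebra.
Set Implicit Arguments. Unset Strict Implicit. Unset Printing Implicit Defensive.
Import Order.TTheory GRing.Theory.

(* The combinatorial heart is a pair of recursions for the number N(x,y) of
   maximal chains of an interval [x,y] with x < y:
     N(x,y) = sum_{z in [x,y], z covered by y} N(x,z)   (top recursion),
     N(x,y) = sum_{z in [x,y], x covered by z} N(z,y)   (bottom recursion).
   For the top recursion, every maximal chain A of [x,y] has a largest element
   z below y; y covers z (by maximality of A), and A minus {y} is a maximal
   chain of [x,z]; conversely B U {y} is maximal in [x,y] for every maximal
   chain B of [x,z].  The bottom recursion is the top one in the dual poset.
   Together with N(x,x) = 1, the two recursions say exactly that N is a left
   and right inverse of eta in the incidence algebra.  The inversion formula
   then follows from the associativity of the action of the incidence algebra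
   on functions on the principal filter X_{>=a}, proved once for any pair of
   mutually inverse elements. *)

Section FiniteChains.
Variables (disp : Order.disp_t) (T : porderType disp).
Local Open Scope order_scope.

(* A nonempty finite chain has a greatest element: take a member whose
   down-set in the chain is as large as possible. *)
Lemma chain_has_max (S : finType) (f : S -> T) (A : {set S}) (u0 : S) :
  u0 \in A -> {in A &, forall u v, f u >=< f v} ->
  exists2 u, u \in A & {in A, forall v, f v <= f u}.
Proof.
move=> u0A chA; pose below u := #|[set v in A | f v <= f u]|.
case: (arg_maxnP below u0A) => u uA umax; exists u => // v vA.
have /orP[//|fuv] : f v >=< f u by exact: chA.
have sub_uv : [set w in A | f w <= f u] \subset [set w in A | f w <= f v].
  by apply/subsetP => w; rewrite !inE => /andP[-> /le_trans->].
have /eqP eq_uv : [set w in A | f w <= f u] == [set w in A | f w <= f v].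
  by rewrite eqEcard sub_uv; exact: umax.
have : v \in [set w in A | f w <= f v] by rewrite inE vA lexx.
by rewrite -eq_uv inE => /andP[].
Qed.
End FiniteChains.

Section MaximalChains.
Variables (disp : Order.disp_t) (T : porderType disp) (L : locfin T).
Local Open Scope order_scope.

Lemma is_chainP (s : seq T) (A : {set seq_sub s}) :
  reflect {in A &, forall u v, val u >=< val v} (is_chain A).
Proof.
apply: (iffP forall_inP) => [chA u v uA vA | chA u uA].
  exact: (forall_inP (chA u uA)).
by apply/forall_inP => v vA; exact: chA.
Qed.

Lemma max_chainP (s : seq T) (A : {set seq_sub s}) :
  reflect (is_chain A /\ forall w, {in A, forall u, val w >=< val u} -> w \in A)
          (maxset (@is_chain _ _ s) A).
Proof.
apply: (iffP maxsetP) => -[chA maxA]; split=> //.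
  move=> w wA; have chwA : is_chain (w |: A).
    move/is_chainP: chA => chA; apply/is_chainP => u v.
    rewrite !in_setU1 => /predU1P[->|uA] /predU1P[->|vA].
    - exact: comparablexx.
    - exact: wA.
    - by rewrite comparable_sym; exact: wA.
    - exact: chA.
  by rewrite -(maxA _ chwA (subsetUr _ _)) setU11.
move=> B /is_chainP chB AB; apply/eqP; rewrite eqEsubset AB andbT; apply/subsetP => w wB.
by apply: maxA => u uA; apply: chB => //; exact: (subsetP AB).
Qed.

Definition in_chain (s : seq T) (A : {set seq_sub s}) (t : T) : bool :=
  [exists u in A, val u == t].

Lemma in_chain_sub (s : seq T) (A : {set seq_sub s}) t (ts : t \in s) :
  in_chain A t = (SeqSub ts \in A).
Proof.
apply/exists_inP/idP => [[u uA /eqP ut] | tA]; last by exists (SeqSub ts).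
by rewrite (_ : SeqSub ts = u) //; apply: val_inj; rewrite /= ut.
Qed.

Lemma in_chainE (s : seq T) (A : {set seq_sub s}) (u : seq_sub s) :
  in_chain A (val u) = (u \in A).
Proof. by case: u => t ts; exact: in_chain_sub. Qed.

Lemma max_chain_mem (s : seq T) (A : {set seq_sub s}) t :
  maxset (@is_chain _ _ s) A -> t \in s ->
  {in A, forall u, t >=< val u} -> in_chain A t.
Proof. by move=> /max_chainP[_ maxA] ts tA; rewrite (in_chain_sub _ ts); exact: maxA. Qed.

Definition max_chains (x y : T) : {set {set seq_sub (itv L x y)}} :=
  [set A | maxset (@is_chain _ _ (itv L x y)) A].

Lemma itv_ge x y (u : seq_sub (itv L x y)) : x <= val u.
Proof. by have := valP u; rewrite mem_itv => /andP[]. Qed.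

Lemma itv_le x y (u : seq_sub (itv L x y)) : val u <= y.
Proof. by have := valP u; rewrite mem_itv => /andP[]. Qed.

Lemma max_chain_top x y A : x <= y -> A \in max_chains x y -> in_chain A y.
Proof.
move=> xy; rewrite inE => maxA; apply: max_chain_mem maxA _ _.
  by rewrite mem_itv xy lexx.
by move=> u _; rewrite ge_comparable ?itv_le.
Qed.

Lemma max_chain_bot x y A : x <= y -> A \in max_chains x y -> in_chain A x.
Proof.
move=> xy; rewrite inE => maxA; apply: max_chain_mem maxA _ _.
  by rewrite mem_itv xy lexx.
by move=> u _; rewrite le_comparable ?itv_ge.
Qed.

Lemma num_max_chains_refl x : num_max_chains L x x = 1%N.
Proof.
have valx (u : seq_sub (itv L x x)) : val u = x.
  by apply/eqP; rewrite eq_le itv_le itv_ge.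
change (#|max_chains x x| = 1%N).
suff -> : max_chains x x = [set setT] by rewrite cards1.
apply/setP => A; rewrite !inE; apply/max_chainP/eqP => [[_ maxA] | ->].
  by apply/setP => w; rewrite inE; apply: maxA => u _; rewrite !valx comparablexx.
split=> [|w _]; last by rewrite inE.
by apply/is_chainP => u v _ _; rewrite !valx comparablexx.
Qed.

Section TopRecursion.
Variables x y : T.
Hypothesis xy : x < y.

Definition below_top (A : {set seq_sub (itv L x y)}) (z : T) : bool :=
  [&& z != y, in_chain A z & [forall u in A, (val u != y) ==> (val u <= z)]].

Lemma below_top_uniq A z1 z2 : below_top A z1 -> below_top A z2 -> z1 = z2.
Proof.
move=> /and3P[z1y /exists_inP[u1 u1A /eqP e1] /forall_inP le1].
move=> /and3P[z2y /exists_inP[u2 u2A /eqP e2] /forall_inP le2]; subst z1 z2.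
by apply/le_anti/andP; split; [move/implyP: (le2 _ u1A); apply | move/implyP: (le1 _ u2A); apply].
Qed.

(* Every maximal chain of [x,y] has an element below y, and y covers it:
   anything strictly between them could be added to the chain. *)
Lemma below_top_exists A : A \in max_chains x y ->
  exists2 z, z \in itv L x y & covb L z y && below_top A z.
Proof.
move=> AM; have maxA := AM; rewrite inE in maxA.
have /max_chainP[/is_chainP chA _] := maxA.
pose A' := [set u in A | val u != y].
have subA' : {subset A' <= A} by move=> u; rewrite inE => /andP[].
have [ux uxA /eqP uxx] := exists_inP (max_chain_bot (ltW xy) AM).
have uxA' : ux \in A' by rewrite inE uxA uxx (lt_eqF xy).
have [u uA' umax] := chain_has_max uxA' (sub_in2 subA' chA).
have [uA uy] : u \in A /\ val u != y by move: uA'; rewrite inE => /andP[].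
have topA : below_top A (val u).
  rewrite /below_top uy in_chainE uA; apply/forall_inP => v vA.
  by apply/implyP => vy; apply: umax; rewrite inE vA.
exists (val u); first exact: valP.
rewrite topA andbT; apply/covbP; split; first by rewrite lt_neqAle uy itv_le.
move=> [w /andP[uw wy]].
have wI : w \in itv L x y by rewrite mem_itv (le_trans (itv_ge u) (ltW uw)) (ltW wy).
have /exists_inP[v vA /eqP vw] : in_chain A w.
  apply: max_chain_mem maxA wI _ => v vA.
  have [->|vy] := eqVneq (val v) y; first exact: le_comparable (ltW wy).
  by rewrite ge_comparable // (le_trans _ (ltW uw)) // umax // inE vA.
have : val v <= val u by apply: umax; rewrite inE vA vw (lt_eqF wy).
by rewrite vw (lt_geF uw).
Qed.

Lemma below_top_count A : A \in max_chains x y ->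
  (\sum_(z <- itv L x y | covb L z y) (below_top A z : nat))%N = 1%N.
Proof.
move=> AM; have [z zI /andP[zy zA]] := below_top_exists AM.
rewrite -big_filter (bigD1_seq z) ?filter_uniq ?itv_uniq ?mem_filter ?zy //= zA.
rewrite big1 ?addn0 // => w wz; case: (boolP (below_top A w)) => // wA.
by move: wz; rewrite (below_top_uniq wA zA) eqxx.
Qed.

Section Extension.
Variable z : T.
Hypothesis zI : z \in itv L x y.
Hypothesis zy : covb L z y.

Definition extend (B : {set seq_sub (itv L x z)}) : {set seq_sub (itv L x y)} :=
  [set u | (val u == y) || in_chain B (val u)].

Definition restrict (A : {set seq_sub (itv L x y)}) : {set seq_sub (itv L x z)} :=
  [set b | in_chain A (val b)].

Let z_lt_y : z < y. Proof. by case/covbP: zy. Qed.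

Let x_le_z : x <= z. Proof. by move: zI; rewrite mem_itv => /andP[]. Qed.

Lemma sub_lt_top (b : seq_sub (itv L x z)) : val b < y.
Proof. exact: le_lt_trans (itv_le b) z_lt_y. Qed.

Lemma sub_in_itv (b : seq_sub (itv L x z)) : val b \in itv L x y.
Proof. by rewrite mem_itv (itv_ge b) ltW ?sub_lt_top. Qed.

Lemma extendK : cancel extend restrict.
Proof.
move=> B; apply/setP => b; rewrite inE (in_chain_sub _ (sub_in_itv b)) inE /=.
by rewrite (lt_eqF (sub_lt_top b)) in_chainE.
Qed.

(* B U {y} is maximal: an element w outside [x,z] and not y would be
   comparable with z, hence lie strictly between z and y. *)
Lemma extend_max_chain B : B \in max_chains x z -> extend B \in max_chains x y.
Proof.
move=> BM; have := BM; rewrite inE => /max_chainP[/is_chainP chB _].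
have maxB := BM; rewrite inE in maxB.
rewrite inE; apply/max_chainP; split.
  apply/is_chainP => u v; rewrite !inE.
  move=> /predU1P[-> | /exists_inP[b1 b1B /eqP <-]].
    move=> /predU1P[-> | /exists_inP[b2 _ /eqP <-]]; first exact: comparablexx.
    exact/ge_comparable/ltW/sub_lt_top.
  move=> /predU1P[-> | /exists_inP[b2 b2B /eqP <-]]; last exact: chB.
  exact/le_comparable/ltW/sub_lt_top.
move=> w wA; rewrite inE; have [//|wy] := eqVneq (val w) y; rewrite /=.
have zA : SeqSub zI \in extend B by rewrite inE /= (max_chain_top x_le_z) ?orbT.
have wz : val w <= z.
  have [-> //|wz] := eqVneq (val w) z.
  have /orP[//|zw] : val w >=< z by exact: wA _ zA.
  case/covbP: zy => _ ncov; exfalso; apply: ncov; exists (val w).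
  by rewrite lt_neqAle eq_sym wz zw lt_neqAle wy (itv_le w).
have wIz : val w \in itv L x z by rewrite mem_itv (itv_ge w) wz.
apply: max_chain_mem maxB wIz _ => b bB.
by apply: (wA (SeqSub (sub_in_itv b))); rewrite inE /= in_chainE bB orbT.
Qed.

Lemma extend_below_top B : B \in max_chains x z -> below_top (extend B) z.
Proof.
move=> BM; rewrite /below_top (lt_eqF z_lt_y) (in_chain_sub _ zI) inE /=.
rewrite (max_chain_top x_le_z) ?orbT //=; apply/forall_inP => u.
rewrite inE => /predU1P[-> | /exists_inP[b _ /eqP <-]]; first by rewrite eqxx.
by rewrite (itv_le b) implybT.
Qed.

Lemma below_top_in_itv A u : below_top A z -> u \in A -> val u != y ->
  val u \in itv L x z.
Proof.
by move=> /and3P[_ _ /forall_inP leA] uA uy; rewrite mem_itv (itv_ge u) (implyP (leA u uA) uy).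
Qed.

Lemma restrict_max_chain A : A \in max_chains x y -> below_top A z ->
  restrict A \in max_chains x z.
Proof.
move=> AM zA; have maxA := AM; rewrite inE in maxA.
have /max_chainP[/is_chainP chA _] := maxA.
rewrite inE; apply/max_chainP; split.
  apply/is_chainP => b1 b2; rewrite !inE.
  move=> /exists_inP[u1 u1A /eqP <-] /exists_inP[u2 u2A /eqP <-]; exact: chA.
move=> w wA; rewrite inE; apply: max_chain_mem maxA (sub_in_itv w) _ => u uA.
have [->|uy] := eqVneq (val u) y; first exact/le_comparable/ltW/sub_lt_top.
by apply: (wA (SeqSub (below_top_in_itv zA uA uy))); rewrite inE /= in_chainE.
Qed.

Lemma restrictK A : A \in max_chains x y -> below_top A z -> extend (restrict A) = A.
Proof.
move=> AM zA; apply/setP => u; rewrite inE.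
have [uy|uy] := eqVneq (val u) y; first by rewrite -in_chainE uy (max_chain_top (ltW xy)).
apply/exists_inP/idP => [[b] | uA].
  by rewrite inE => bA /eqP bu; rewrite -in_chainE -bu.
by exists (SeqSub (below_top_in_itv zA uA uy)); rewrite ?inE /= ?in_chainE.
Qed.

Lemma card_below_top :
  #|[set A in max_chains x y | below_top A z]| = num_max_chains L x z.
Proof.
have -> : [set A in max_chains x y | below_top A z] = extend @: max_chains x z.
  apply/setP => A; rewrite inE; apply/andP/imsetP => [[AM zA] | [B BM ->]].
    by exists (restrict A); [exact: restrict_max_chain | rewrite restrictK].
  by split; [exact: extend_max_chain | exact: extend_below_top].
exact: card_imset (can_inj extendK).
Qed.

End Extension.

Lemma num_max_chains_rec_top :
  num_max_chains L x y = (\sum_(z <- itv L x y | covb L z y) num_max_chains L x z)%N.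
Proof.
change (#|max_chains x y| = \sum_(z <- itv L x y | covb L z y) num_max_chains L x z)%N.
rewrite -sum1_card (eq_bigr (fun A => \sum_(z <- itv L x y | covb L z y) (below_top A z : nat)));
  last by move=> A AM; rewrite below_top_count.
rewrite exchange_big [LHS]big_seq_cond [RHS]big_seq_cond; apply: eq_bigr => z /andP[zI zy].
rewrite -(card_below_top zI zy) -sum1_card.
rewrite (eq_bigl (fun A => (A \in max_chains x y) && below_top A z)); last by move=> A; rewrite inE.
by rewrite big_mkcondr; apply: eq_bigr => A _; case: below_top.
Qed.

End TopRecursion.

End MaximalChains.

Section Duality.
Variables (disp : Order.disp_t) (T : porderType disp) (L : locfin T).
Local Open Scope order_scope.

Definition dual_locfin : locfin T^d.
Proof.
refine (@LocFin _ T^d (fun a b => itv L b a) (fun a b => itv_uniq L b a) _).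
by move=> a b c; exact: etrans (mem_itv L b a c) (andbC _ _).
Defined.

(* Chains are self-dual, so [x,y] and its dual have the same maximal chains. *)
Lemma num_max_chains_dual x y : num_max_chains dual_locfin y x = num_max_chains L x y.
Proof.
apply: eq_card => A; rewrite !inE; apply: maxset_eq => B.
apply/forall_inP/forall_inP => chB u uB; apply/forall_inP => v vB;
  by have /forall_inP/(_ v vB) := chB u uB; rewrite orbC.
Qed.

Lemma covb_dual x y : covb dual_locfin y x = covb L x y.
Proof.
rewrite /covb ltEdual; congr (_ && ~~ _).
by apply: eq_has => z; rewrite /= !ltEdual andbC.
Qed.

Lemma num_max_chains_rec_bot x y : x < y ->
  num_max_chains L x y = (\sum_(z <- itv L x y | covb L x z) num_max_chains L z y)%N.
Proof.
move=> xy; rewrite -num_max_chains_dual (@num_max_chains_rec_top _ _ _ (y : T^d) x) //.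
by apply: eq_big => [z | z _]; rewrite ?covb_dual ?num_max_chains_dual.
Qed.

End Duality.

Section IntervalSums.
Variables (disp : Order.disp_t) (T : porderType disp) (L : locfin T).
Variable R : comPzRingType.
Local Open Scope ring_scope.

Lemma big_uniq_filter (s1 s2 : seq T) (P : pred T) (F : T -> R) :
  uniq s1 -> uniq s2 -> s1 =i [pred w | (w \in s2) && P w] ->
  \sum_(w <- s1) F w = \sum_(w <- s2 | P w) F w.
Proof.
move=> u1 u2 e; rewrite -[RHS]big_filter; apply/perm_big/uniq_perm => //.
  by rewrite filter_uniq.
by move=> w; rewrite e mem_filter inE andbC.
Qed.

Lemma sum_itv_sub_r a x y (F : T -> R) : (x <= y)%O ->
  \sum_(w <- itv L a x) F w = \sum_(w <- itv L a y | (w <= x)%O) F w.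
Proof.
move=> xy; apply: big_uniq_filter; rewrite ?itv_uniq // => w.
rewrite !inE !mem_itv -andbA.
by case wx: (w <= x)%O; rewrite ?andbF // (le_trans wx xy) !andbT.
Qed.

Lemma sum_itv_sub_l a w y (F : T -> R) : (a <= w)%O ->
  \sum_(x <- itv L w y) F x = \sum_(x <- itv L a y | (w <= x)%O) F x.
Proof.
move=> aw; apply: big_uniq_filter; rewrite ?itv_uniq // => x.
rewrite !inE !mem_itv.
by case wx: (w <= x)%O; rewrite ?andbF // (le_trans aw wx) andbT.
Qed.

Lemma sum_itv_exchange a y (F : T -> T -> R) :
  \sum_(x <- itv L a y) \sum_(w <- itv L a x) F w x =
  \sum_(w <- itv L a y) \sum_(x <- itv L w y) F w x.
Proof.
rewrite (eq_big_seq (fun x => \sum_(w <- itv L a y | (w <= x)%O) F w x)); last first.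
  by move=> x; rewrite mem_itv => /andP[_ xy]; exact: sum_itv_sub_r.
rewrite [RHS](eq_big_seq (fun w => \sum_(x <- itv L a y | (w <= x)%O) F w x)); last first.
  by move=> w; rewrite mem_itv => /andP[aw _]; exact: sum_itv_sub_l.
under eq_bigr do rewrite big_mkcond.
by rewrite exchange_big; under eq_bigr do rewrite -big_mkcond.
Qed.

Lemma sum_delta (s : seq T) t (F : T -> R) : uniq s -> t \in s ->
  \sum_(w <- s) F w * (w == t)%:R = F t.
Proof.
move=> us ts; rewrite (bigD1_seq t) //= eqxx mulr1 big1 ?addr0 // => w wt.
by rewrite (negbTE wt) mulr0.
Qed.

End IntervalSums.

Section Inversion.
Variables (disp : Order.disp_t) (T : porderType disp) (L : locfin T).
Variable R : comPzRingType.
Local Open Scope ring_scope.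

Lemma row_mul_assoc (h k : T -> T -> R) a (f g : T -> R) :
  (forall y, (a <= y)%O -> g y = \sum_(x <- itv L a y) f x * h x y) ->
  forall y, (a <= y)%O ->
  \sum_(x <- itv L a y) g x * k x y = \sum_(w <- itv L a y) f w * inc_mul L h k w y.
Proof.
move=> gE y ay.
rewrite (eq_big_seq (fun x => \sum_(w <- itv L a x) f w * h w x * k x y)); last first.
  by move=> x; rewrite mem_itv => /andP[ax _]; rewrite gE // mulr_suml.
rewrite sum_itv_exchange; apply: eq_bigr => w _.
by rewrite /inc_mul mulr_sumr; apply: eq_bigr => x _; rewrite mulrA.
Qed.

Lemma row_mul_inverse (h k : T -> T -> R) a (f g : T -> R) :
  inc_eq (inc_mul L h k) (inc_unit R) ->
  (forall y, (a <= y)%O -> g y = \sum_(x <- itv L a y) f x * h x y) ->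
  forall y, (a <= y)%O -> f y = \sum_(x <- itv L a y) g x * k x y.
Proof.
move=> hk gE y ay; rewrite (row_mul_assoc k gE ay).
rewrite (eq_big_seq (fun w => f w * (w == y)%:R)); last first.
  by move=> w; rewrite mem_itv => /andP[_ wy]; rewrite hk.
by rewrite sum_delta ?itv_uniq ?mem_itv ?ay ?lexx.
Qed.

Lemma inc_inversion (h k : T -> T -> R) a (f g : T -> R) :
  inc_inverse L h k ->
  (forall y, (a <= y)%O -> g y = \sum_(x <- itv L a y) f x * h x y) <->
  (forall y, (a <= y)%O -> f y = \sum_(x <- itv L a y) g x * k x y).
Proof. by case=> hk kh; split; apply: row_mul_inverse. Qed.

End Inversion.

Local Open Scope ring_scope.

Lemma covering_eta (disp : Order.disp_t) (T : porderType disp) (L : locfin T)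
  (R : comPzRingType) (eta : T -> T -> R) :
  (forall x, eta x x = 1) -> (forall x y, covers x y -> eta x y = -1) ->
  (forall x y, (x <= y)%O -> x != y -> ~ covers x y -> eta x y = 0) ->
  forall x z, (x <= z)%O -> eta x z = (x == z)%:R - (covb L x z)%:R.
Proof.
move=> eta_diag eta_cov eta_else x z xz; have [<-|xz'] := eqVneq x z.
  by rewrite eta_diag /covb ltxx subr0.
have [cov|ncov] := boolP (covb L x z).
  by rewrite eta_cov ?sub0r //; apply/(covbP L).
by rewrite eta_else ?subr0 //; apply/(covbP L).
Qed.

Section CoveringInverse.
Variables (disp : Order.disp_t) (T : porderType disp) (L : locfin T).
Variables (R : comPzRingType) (eta : T -> T -> R).
Hypothesis etaE : forall x z, (x <= z)%O -> eta x z = (x == z)%:R - (covb L x z)%:R.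

Lemma covb_lt x y : covb L x y -> (x < y)%O.
Proof. by case/andP. Qed.

Lemma eta_mul_l x y (G : T -> R) : (x <= y)%O ->
  \sum_(z <- itv L x y) eta x z * G z = G x - \sum_(z <- itv L x y | covb L x z) G z.
Proof.
move=> xy; rewrite (eq_big_seq (fun z => G z * (z == x)%:R - G z * (covb L x z)%:R)).
  rewrite sumrB sum_delta ?itv_uniq ?mem_itv ?lexx ?xy //; congr (_ - _).
  by rewrite [RHS]big_mkcond; apply: eq_bigr => z _; case: covb; rewrite ?mulr1 ?mulr0.
move=> z; rewrite mem_itv => /andP[xz _].
by rewrite etaE // mulrBl eq_sym !(mulrC _ (G z)).
Qed.

Lemma eta_mul_r x y (G : T -> R) : (x <= y)%O ->
  \sum_(z <- itv L x y) G z * eta z y = G y - \sum_(z <- itv L x y | covb L z y) G z.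
Proof.
move=> xy; rewrite (eq_big_seq (fun z => G z * (z == y)%:R - G z * (covb L z y)%:R)).
  rewrite sumrB sum_delta ?itv_uniq ?mem_itv ?lexx ?xy //; congr (_ - _).
  by rewrite [RHS]big_mkcond; apply: eq_bigr => z _; case: covb; rewrite ?mulr1 ?mulr0.
by move=> z; rewrite mem_itv => /andP[_ zy]; rewrite etaE // mulrBr.
Qed.

Definition chain_count (x y : T) : R := (num_max_chains L x y)%:R.

Lemma sum_covb_refl x (G : T -> R) :
  (\sum_(z <- itv L x x | covb L x z) G z = 0) /\
  (\sum_(z <- itv L x x | covb L z x) G z = 0).
Proof.
split; rewrite big1_seq // => z; rewrite mem_itv => /andP[/covb_lt lt /andP[zx xz]].
  by rewrite (lt_geF lt) in xz.
by rewrite (lt_geF lt) in zx.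
Qed.

(* eta * N = 1 is the bottom recursion, N * eta = 1 the top recursion. *)
Lemma eta_mul_chain_count : inc_eq (inc_mul L eta chain_count) (inc_unit R).
Proof.
move=> x y xy; rewrite /inc_mul eta_mul_l // /inc_unit.
have [<-|nxy] := eqVneq x y.
  by rewrite (sum_covb_refl x _).1 subr0 /chain_count num_max_chains_refl.
have lt_xy : (x < y)%O by rewrite lt_neqAle nxy xy.
by rewrite /chain_count (num_max_chains_rec_bot L lt_xy) natr_sum subrr.
Qed.

Lemma chain_count_mul_eta : inc_eq (inc_mul L chain_count eta) (inc_unit R).
Proof.
move=> x y xy; rewrite /inc_mul eta_mul_r // /inc_unit.
have [<-|nxy] := eqVneq x y.
  by rewrite (sum_covb_refl x _).2 subr0 /chain_count num_max_chains_refl.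
have lt_xy : (x < y)%O by rewrite lt_neqAle nxy xy.
by rewrite /chain_count (num_max_chains_rec_top L lt_xy) natr_sum subrr.
Qed.

Lemma chain_count_inverse : inc_inverse L eta chain_count.
Proof. by split; [exact: eta_mul_chain_count | exact: chain_count_mul_eta]. Qed.

End CoveringInverse.

Theorem mainTheorem7 (disp : Order.disp_t) (T : porderType disp) (L : locfin T)
  (R : comPzRingType) (eta : T -> T -> R)
  (eta_diag : forall x : T, eta x x = 1)
  (eta_cov : forall x y : T, covers x y -> eta x y = -1)
  (eta_else : forall x y : T, (x <= y)%O -> x != y -> ~ covers x y -> eta x y = 0) :
  (exists etainv : T -> T -> R, inc_inverse L eta etainv /\
     forall x y : T, (x <= y)%O -> etainv x y = (num_max_chains L x y)%:R)
  /\
  (forall (a : T) (f g : T -> R),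
     (forall y : T, (a <= y)%O ->
        g y = f y - \sum_(x <- itv L a y | covb L x y) f x)
     <->
     (forall y : T, (a <= y)%O ->
        f y = \sum_(x <- itv L a y) (num_max_chains L x y)%:R * g x)).
Proof.
have etaE := covering_eta L eta_diag eta_cov eta_else.
have inv := chain_count_inverse etaE.
split; first by exists (chain_count L R).
move=> a f g.
have gE : (forall y, (a <= y)%O -> g y = f y - \sum_(x <- itv L a y | covb L x y) f x) <->
          (forall y, (a <= y)%O -> g y = \sum_(x <- itv L a y) f x * eta x y).
  by split=> hyp y ay; rewrite hyp // eta_mul_r.
have fE : (forall y, (a <= y)%O -> f y = \sum_(x <- itv L a y) g x * chain_count L R x y) <->
          (forall y, (a <= y)%O -> f y = \sum_(x <- itv L a y) (num_max_chains L x y)%:R * g x).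
  by split=> hyp y ay; rewrite hyp //; apply: eq_bigr => x _; rewrite mulrC.
exact: iff_trans gE (iff_trans (inc_inversion a f g inv) fE).
Qed.
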